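(* Let $T=(V,E,\gamma,\mathrm{p})$ be a fault tree. Then the output of Algorithm $\mathtt{SFPA}$ (described in the context) on input $T$ equals the unreliability $U(T)$.
   Context: A fault tree (FT) is a tuple $T=(V,E,\gamma,\mathrm{p})$ where $(V,E)$ is a rooted directed acyclic graph (edges point from a node to its children; the root is denoted $R_T$), $\gamma\colon V\to\{\mathtt{OR},\mathtt{AND},\mathtt{BE}\}$ satisfies $\gamma(v)=\mathtt{BE}$ iff $v$ is a leaf, and $\mathrm{p}\colon \mathrm{BE}(T)\to[0,1]$ with $\mathrm{BE}(T)=\{v\in V\mid \gamma(v)=\mathtt{BE}\}$. Let $\mathrm{ch}(v)$ be the set of children of $v$. For $\vec f\in\{0,1\}^{\mathrm{BE}(T)}$ the structure function is defined recursively by $S_T(v,\vec f)=f_v$ if $\gamma(v)=\mathtt{BE}$, $S_T(v,\vec f)=\bigvee_{w\in\mathrm{ch}(v)}S_T(w,\vec f)$ if $\gamma(v)=\mathtt{OR}$, and $S_T(v,\vec f)=\bigwedge_{w\in\mathrm{ch}(v)}S_T(w,\vec f)$ if $\gamma(v)=\mathtt{AND}$. Let $\vec F$ be a random vector in $\{0,1\}^{\mathrm{BE}(T)}$ with independent coordinates and $\mathbb P(F_v=1)=\mathrm{p}(v)$. The unreliability is $U(T)=\mathbb P(S_T(R_T,\vec F)=1)$. Order and dominators: write $x\preceq y$ iff there is a directed path (possibly of length $0$) from $y$ to $x$, and $x\prec y$ iff $x\preceq y$ and $x\neq y$. A node $w$ dominates $v$ if $v\prec w$ and every directed path from $R_T$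 to $v$ contains $w$. For every $v\neq R_T$ there is a unique dominator $\mathrm{id}(v)$ of $v$ (the immediate dominator) such that $\mathrm{id}(v)\preceq w'$ for every dominator $w'$ of $v$. Squarefree polynomial algebra: for a finite set $X$, $\mathcal A(X)$ is the real algebra of formal sums $\alpha=\sum_{Y\subseteq X}\alpha_Y\prod_{x\in Y}\mathsf F_x$ ($\alpha_Y\in\mathbb R$, $\mathsf F_x$ formal variables), with addition and multiplication as for polynomials subject to $\mathsf F_x^2=\mathsf F_x$, i.e. $(\alpha+\beta)_Y=\alpha_Y+\beta_Y$ and $(\alpha\beta)_Y=\sum_{Y',Y''\subseteq X,\,Y'\cup Y''=Y}\alpha_{Y'}\beta_{Y''}$. If $X\subseteq X'$, elements of $\mathcal A(X)$ are regarded as elements of $\mathcal A(X')$ (coefficients $0$ outside $X$); $\mathcal A(\varnothing)=\mathbb R$. For finite sets $X,Y$, $x\in X\setminus Y$, $\alpha\in\mathcal A(X)$, $\beta\in\mathcal A(Y)$, the substitution $\alpha[\mathsf F_x\mapsto\beta]\in\mathcal A((X\setminus\{x\})\cup Y)$ is $\beta\cdot\sum_{Z\subseteq X,\,x\in Z}\alpha_Z\prod_{x'\in Z\setminus\{x\}}\mathsf F_{x'}+\sum_{Z\subseteq X,\,x\notin Z}\alpha_Z\prod_{x'\in Z}\mathsf F_{x'}$, computed in $\mathcal A((X\setminus\{x\})\cup Y)$. Algorithm $\mathtt{SFPA}(T)$: set $\mathsf{ToDo}\leftarrow V$. While $\mathsf{ToDo}\neq\varnothing$: pick $v\in\mathsf{ToDo}$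 minimal w.r.t. $\preceq$ and remove it from $\mathsf{ToDo}$. If $\gamma(v)=\mathtt{BE}$, set $g_v\leftarrow\mathrm{p}(v)$. Otherwise set $g_v\leftarrow 1-\prod_{w\in\mathrm{ch}(v)}(1-\mathsf F_w)$ if $\gamma(v)=\mathtt{OR}$, and $g_v\leftarrow\prod_{w\in\mathrm{ch}(v)}\mathsf F_w$ if $\gamma(v)=\mathtt{AND}$ (variables indexed by nodes); then set $\mathsf{ToDo}_v\leftarrow\{w\in V\mid \mathrm{id}(w)=v\}$ and, while $\mathsf{ToDo}_v\neq\varnothing$, pick $w\in\mathsf{ToDo}_v$ maximal w.r.t. $\preceq$, remove it from $\mathsf{ToDo}_v$, and set $g_v\leftarrow g_v[\mathsf F_w\mapsto g_w]$. Finally return $g_{R_T}$. *)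

From HB Require Import structures.
From mathcomp Require Import all_boot all_order all_algebra.
Set Implicit Arguments. Unset Strict Implicit. Unset Printing Implicit Defensive.
Import Order.TTheory GRing.Theory Num.Theory.
Local Open Scope ring_scope.

Inductive gate := OR | AND | BE.

Definition isBE (g : gate) : bool := if g is BE then true else false.

Section FaultTree.
Variables (R : realFieldType) (V : finType).
Variables (E : rel V) (gamma : V -> gate) (p : V -> R) (root : V).

Definition preceq (x y : V) : bool := connect E y x.
Definition prec (x y : V) : bool := preceq x y && (x != y).

Definition is_fault_tree : Prop :=
  [/\ (forall x y, E x y -> ~~ connect E y x),
      (forall v, connect E root v),
      (forall v, isBE (gamma v) = ~~ [exists w, E v w])
    & (forall v, isBE (gamma v) -> 0 <= p v <= 1)].

(* recursion along the DAG; fuel #|V| exceeds the length of every path *)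
Fixpoint Sfuel (n : nat) (v : V) (f : V -> bool) : bool :=
  match n with
  | 0 => f v
  | n'.+1 =>
    match gamma v with
    | BE => f v
    | OR => [exists w, E v w && Sfuel n' w f]
    | AND => [forall w, E v w ==> Sfuel n' w f]
    end
  end.

Definition S_T (v : V) (f : V -> bool) : bool := Sfuel #|V| v f.

Definition BEt := {v : V | isBE (gamma v)}.

(* extension of a vector indexed by BE(T) to all nodes (non-BE values are
   never read by the structure function) *)
Definition extf (f : {ffun BEt -> bool}) (v : V) : bool :=
  match @insub V (fun v => isBE (gamma v)) BEt v with
  | Some u => f u
  | None => false
  end.

Definition unreliability : R :=
  \sum_(f : {ffun BEt -> bool} | S_T root (extf f))
     \prod_(u : BEt) (if f u then p (val u) else 1 - p (val u)).

(* alpha = sum_{Y ⊆ V} alpha_Y prod_{x in Y} F_x ; A(X) ⊆ A(V) for X ⊆ V *)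
Definition sfp := {ffun {set V} -> R}.

Definition cstA (c : R) : sfp := [ffun Y : {set V} => if Y == set0 then c else 0].
Definition varA (x : V) : sfp := [ffun Y : {set V} => if Y == [set x] then 1 else 0].
Definition addA (a b : sfp) : sfp := [ffun Y : {set V} => a Y + b Y].
Definition subA (a b : sfp) : sfp := [ffun Y : {set V} => a Y - b Y].
Definition mulA (a b : sfp) : sfp :=
  [ffun Y : {set V} => \sum_(Y1 : {set V}) \sum_(Y2 : {set V} | Y1 :|: Y2 == Y) a Y1 * b Y2].
Definition prodA (s : seq sfp) : sfp := foldr mulA (cstA 1) s.

Definition substA (a : sfp) (x : V) (b : sfp) : sfp :=
  addA (mulA b [ffun Y : {set V} => \sum_(Z : {set V} | (x \in Z) && (Z :\ x == Y)) a Z])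
       [ffun Y : {set V} => if x \in Y then 0 else a Y].

Definition dominates (w v : V) : Prop :=
  prec v w /\
  (forall s : seq V, path E root s -> last root s = v -> w \in root :: s).

Definition is_idom (w d : V) : Prop :=
  dominates d w /\ (forall d', dominates d' w -> preceq d d').

(* s is an admissible order of processing ToDo_v = {w | id(w) = v}:
   each picked element is maximal w.r.t. ⪯ among those remaining *)
Definition todo_order (v : V) (s : seq V) : Prop :=
  [/\ uniq s,
      (forall w, w \in s <-> is_idom w v)
    & (forall i j, (i < j < size s)%N -> ~~ prec (nth v s i) (nth v s j))].

Definition gate_poly (v : V) : sfp :=
  match gamma v with
  | OR => subA (cstA 1) (prodA [seq subA (cstA 1) (varA w) | w <- enum V & E v w])
  | AND => prodA [seq varA w | w <- enum V & E v w]
  | BE => cstA (p v)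
  end.

(* g_v, given the order [ord v] in which ToDo_v is processed; since the
   outer loop processes v only after all its descendants and g_w is never
   modified after w is processed, g_v only depends on these inner orders *)
Fixpoint gfuel (ord : V -> seq V) (n : nat) (v : V) : sfp :=
  match n with
  | 0 => cstA 0
  | n'.+1 =>
    match gamma v with
    | BE => cstA (p v)
    | _ => foldl (fun acc w => substA acc w (gfuel ord n' w)) (gate_poly v) (ord v)
    end
  end.

Definition SFPA (ord : V -> seq V) : sfp := gfuel ord #|V| root.

End FaultTree.

(* Evaluating a squarefree polynomial at the 0/1 points F_x := (x \in T) is an
   injective ring morphism on A(V), and it turns substitution into conditioning:
     alpha[F_w |-> beta](T) = beta(T) alpha(T + w) + (1 - beta(T)) alpha(T - w).
   Let K_v consist of v and the nodes dominated by v.  By induction, g_v evaluated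
   at T is the probability that v fails when the basic events of K_v fail
   independently with their probabilities p and every other node fails iff it
   lies in T.  K_v is v together with the K_w for id(w) = v; each K_w lies below w
   and is entered only through w, and since ToDo_v is processed from maximal to
   minimal nodes it is disjoint from the K_w' substituted before it.  Substituting
   g_w for F_w therefore accounts exactly for K_w, with w acting as one more
   independent event of failure probability g_w.  As K_root = V, g_root takes the
   value U at every point, so it is the constant U. *)

From Pilot Require Import Defs.
From mathcomp Require Import all_boot all_order all_algebra.
From mathcomp Require Import ring zify boolp.

Set Implicit Arguments. Unset Strict Implicit. Unset Printing Implicit Defensive.
Import Order.TTheory GRing.Theory Num.Theory.

Section Dag.
Variables (V : finType) (E : rel V).
Hypothesis acyclic : forall x y, E x y -> ~~ connect E y x.

Lemma connect_antisym x y : connect E x y -> connect E y x -> x = y.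
Proof.
case/connectP => [[|z s]] /= => [_ -> //|/andP[Exz Hp] Hl Hyx].
have Hzy : connect E z y by apply/connectP; exists s.
by move: (acyclic Exz); rewrite (connect_trans Hzy Hyx).
Qed.

Lemma edge_neq x y : E x y -> x != y.
Proof. by move=> Exy; apply: contraTneq (acyclic Exy) => ->; rewrite connect0. Qed.

Definition ndesc x := #|[set z | connect E x z]|.

Lemma ndesc_gt0 x : (0 < ndesc x)%N.
Proof. by apply/card_gt0P; exists x; rewrite inE connect0. Qed.

Lemma ndesc_le_card x : (ndesc x <= #|V|)%N.
Proof. exact: max_card. Qed.

Lemma ndesc_connect_lt x y : connect E x y -> x != y -> (ndesc y < ndesc x)%N.
Proof.
move=> Hxy Nxy; apply/proper_card/properP; split.
  by apply/subsetP => z; rewrite !inE => /(connect_trans Hxy).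
exists x; rewrite !inE ?connect0 //.
by apply: contra_neqN Nxy => /(connect_antisym Hxy).
Qed.

Lemma ndesc_edge_lt x y : E x y -> (ndesc y < ndesc x)%N.
Proof. by move=> Exy; exact: ndesc_connect_lt (connect1 Exy) (edge_neq Exy). Qed.

Lemma dag_ind (P : V -> Prop) :
  (forall u, (forall c, E u c -> P c) -> P u) -> forall u, P u.
Proof.
move=> IH; suff H n u : ndesc u = n -> P u by move=> u; exact: H.
elim/ltn_ind: n u => n IHn u Hu; apply: IH => c /ndesc_edge_lt.
by rewrite Hu => /IHn; apply.
Qed.

Lemma top_down_ind (P : V -> Prop) :
  (forall u, (forall d, (ndesc u < ndesc d)%N -> P d) -> P u) -> forall u, P u.
Proof.
move=> IH; suff H n u : (#|V| - ndesc u)%N = n -> P u by move=> u; exact: H.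
elim/ltn_ind: n u => n IHn u Hu; apply: IH => d Hud.
have := ndesc_le_card d => Hd; apply: (IHn (#|V| - ndesc d)%N) => //; lia.
Qed.

End Dag.

Section Paths.
Variables (V : finType) (E : rel V).

Lemma path_connect_last x s w : path E x s -> w \in x :: s -> connect E w (last x s).
Proof.
move=> + Hw; case/splitPl: Hw => s1 s2 <-; rewrite cat_path last_cat => /andP[_ Hp2].
by apply: (path_connect Hp2); rewrite mem_last.
Qed.

Lemma path_prefix x s w : path E x s -> w \in x :: s ->
  exists s1, [/\ path E x s1, last x s1 = w & {subset x :: s1 <= x :: s}].
Proof.
move=> + Hw; case/splitPl: Hw => s1 s2 <-; rewrite cat_path => /andP[Hp1 _].
by exists s1; split=> // z; rewrite -cat_cons mem_cat => ->.
Qed.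

Lemma path_mem_connect x s a b : path E x s -> a \in x :: s -> b \in x :: s ->
  connect E a b \/ connect E b a.
Proof.
elim: s x => [|y s IH] x /=.
  by move=> _; rewrite !inE => /eqP -> /eqP ->; left.
move=> Hxs; have Hx : {subset x :: y :: s <= connect E x} by exact: path_connect.
case/andP: Hxs => _ Hp.
rewrite inE => /predU1P[-> Hb|Ha]; first by left; exact: Hx.
rewrite inE => /predU1P[-> |Hb]; first by right; apply: Hx; rewrite inE Ha orbT.
exact: IH Hp Ha Hb.
Qed.

End Paths.

Section Dominators.
Variables (V : finType) (E : rel V) (root : V).
Hypothesis acyclic : forall x y, E x y -> ~~ connect E y x.
Hypothesis rooted : forall v, connect E root v.

Lemma dominates_connect w u : dominates E root w u -> connect E w u.
Proof. by case=> /andP[]. Qed.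

Lemma dominates_neq w u : dominates E root w u -> u != w.
Proof. by case=> /andP[]. Qed.

Lemma dominates_connectN w u : dominates E root w u -> ~~ connect E u w.
Proof.
move=> Dwu; apply: contra_neqN (dominates_neq Dwu) => Huw.
exact: (connect_antisym acyclic Huw (dominates_connect Dwu)).
Qed.

Lemma ndesc_dominates_lt w u : dominates E root w u -> (ndesc E u < ndesc E w)%N.
Proof.
move=> Dwu; apply: (ndesc_connect_lt acyclic (dominates_connect Dwu)).
by rewrite eq_sym (dominates_neq Dwu).
Qed.

Lemma dominates_trans a b c : dominates E root a b -> dominates E root b c ->
  dominates E root a c.
Proof.
rewrite /dominates /prec /preceq => -[/andP[Hab Nba] Da] [/andP[Hbc Ncb] Db]; split.
  rewrite (connect_trans Hab Hbc) /=.
  apply: contra_neq Ncb => Eca; rewrite Eca in Hbc *.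
  exact: (connect_antisym acyclic Hab Hbc).
move=> s Hp Hl; have [s1 [Hp1 Hl1 Hs1]] := path_prefix Hp (Db s Hp Hl).
exact/Hs1/(Da s1 Hp1 Hl1).
Qed.

Lemma path_to v : exists2 s, path E root s & last root s = v.
Proof. by case/connectP: (rooted v) => s Hp Hl; exists s. Qed.

Lemma dominates_total a b u : dominates E root a u -> dominates E root b u ->
  connect E a b \/ connect E b a.
Proof.
move=> [_ Da] [_ Db]; have [s Hp Hl] := path_to u.
exact: path_mem_connect Hp (Da s Hp Hl) (Db s Hp Hl).
Qed.

Lemma dominates_above a b z : dominates E root a z -> connect E b z ->
  ~~ connect E b a -> dominates E root a b.
Proof.
move=> [_ Da] Hbz Nba.
have Hpaths s : path E root s -> last root s = b -> a \in root :: s.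
  move=> Hp Hl; case/connectP: Hbz => s' Hp' Hl'.
  have := Da (s ++ s'); rewrite cat_path last_cat Hp Hl Hp' -Hl' -cat_cons mem_cat.
  case/(_ isT erefl)/orP => // Has'.
  by move: Nba; rewrite (path_connect Hp') // inE Has' orbT.
split=> //; rewrite /prec /preceq; apply/andP; split.
  have [s Hp Hl] := path_to b.
  by rewrite -Hl; exact: path_connect_last Hp (Hpaths s Hp Hl).
by apply: contraNneq Nba => ->; exact: connect0.
Qed.

Lemma dominates_edge w z c : dominates E root w c -> E z c -> connect E w z.
Proof.
move=> Dwc Ezc; have Ncw := dominates_neq Dwc; case: Dwc => _ Dwc.
have [s Hp Hl] := path_to z.
have := Dwc (rcons s c); rewrite rcons_path last_rcons Hp Hl Ezc -rcons_cons mem_rcons.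
move=> /(_ isT erefl); rewrite inE eq_sym (negbTE Ncw) -Hl => Hws.
exact: path_connect_last Hp Hws.
Qed.

Lemma dominates_between a b u : dominates E root a u -> dominates E root b u ->
  connect E a b -> a != b -> dominates E root a b.
Proof.
move=> Dau Dbu Hab Nab; apply: (dominates_above Dau (dominates_connect Dbu)).
by apply: contra_neqN Nab => Hba; exact: (connect_antisym acyclic Hab Hba).
Qed.

Lemma root_dominates u : u != root -> dominates E root root u.
Proof. by move=> Hu; split=> [|s _ _]; rewrite ?mem_head // /prec /preceq rooted. Qed.

Lemma idom_exists u : u != root -> exists d, is_idom E root u d.
Proof.
move=> Hu; pose D := [pred d | `[< dominates E root d u >]].
have Droot : D root by apply/asboolP/root_dominates.
case: (@arg_minnP _ root D (ndesc E) Droot) => d /asboolP Dd dmin.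
exists d; split=> // d' Dd'; case: (dominates_total Dd Dd') => // Hdd'.
have [<-|Ndd'] := eqVneq d d'; first exact: connect0.
by have := dmin d' (asboolT Dd'); rewrite leqNgt (ndesc_connect_lt acyclic Hdd' Ndd').
Qed.

End Dominators.

Definition assign (V : finType) (w : V) (b : bool) (T : {set V}) : {set V} :=
  if b then w |: T else T :\ w.
Arguments assign : simpl never.

Section Assign.
Variable V : finType.
Implicit Types (T : {set V}) (u w x : V).

Lemma in_assign x w b T : (x \in assign w b T) = if x == w then b else x \in T.
Proof. by rewrite /assign; case: b; rewrite !inE; case: eqP. Qed.

Lemma assignC u w c b T :
  u != w -> assign u c (assign w b T) = assign w b (assign u c T).
Proof.
move=> Nuw; apply/setP => x; rewrite !in_assign.
by case: (eqVneq x u) => [->|//]; rewrite (negbTE Nuw).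
Qed.

Lemma assign_assign w c b T : assign w b (assign w c T) = assign w b T.
Proof. by apply/setP => x; rewrite !in_assign; case: eqP. Qed.

Definition indep (A : Type) (h : {set V} -> A) x :=
  forall b T, h (assign x b T) = h T.

End Assign.

Local Open Scope ring_scope.

Definition mix (R : pzRingType) (c x y : R) : R := c * x + (1 - c) * y.

Section Evaluation.
Variables (R : realFieldType) (V : finType).
Implicit Types (a b : sfp R V) (T : {set V}).

(* The value of [a] at the point [F_x = (x \in T)]. *)
Definition evalA a T : R := \sum_(Y : {set V} | Y \subset T) a Y.

Lemma evalA_cst c T : evalA (cstA V c) T = c.
Proof.
rewrite /evalA (bigD1 set0) ?sub0set //= ffunE eqxx big1 ?addr0 // => Y /andP[_].
by rewrite ffunE => /negbTE ->.
Qed.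

Lemma evalA_var x T : evalA (varA R x) T = (x \in T)%:R.
Proof.
rewrite /evalA; case: (boolP (x \in T)) => Hx.
  rewrite (bigD1 [set x]) ?sub1set //= ffunE eqxx big1 ?addr0 // => Y /andP[_].
  by rewrite ffunE => /negbTE ->.
rewrite big1 // => Y HY; rewrite ffunE; case: eqP => // EY.
by move: HY; rewrite EY sub1set (negbTE Hx).
Qed.

Lemma evalA_add a b T : evalA (Defs.addA a b) T = evalA a T + evalA b T.
Proof. by rewrite /evalA -big_split; apply: eq_bigr => Y _; rewrite ffunE. Qed.

Lemma evalA_sub a b T : evalA (subA a b) T = evalA a T - evalA b T.
Proof. by rewrite /evalA -sumrB; apply: eq_bigr => Y _; rewrite ffunE. Qed.

Lemma evalA_mul a b T : evalA (Defs.mulA a b) T = evalA a T * evalA b T.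
Proof.
rewrite /evalA big_distrlr /=.
transitivity (\sum_(Y1 : {set V}) \sum_(Y2 : {set V})
    (if Y1 :|: Y2 \subset T then a Y1 * b Y2 else 0)).
  under eq_bigr do rewrite ffunE.
  rewrite big_mkcond /= (eq_bigr (fun Y : {set V} => \sum_(Y1 : {set V}) \sum_(Y2 : {set V})
      if (Y \subset T) && (Y1 :|: Y2 == Y) then a Y1 * b Y2 else 0)).
    rewrite exchange_big; apply: eq_bigr => Y1 _.
    rewrite exchange_big; apply: eq_bigr => Y2 _.
    rewrite (bigD1 (Y1 :|: Y2)) //= eqxx andbT big1 ?addr0 // => Y /negbTE NY.
    by rewrite eq_sym NY andbF.
  move=> Y _; case: (Y \subset T); last by rewrite big1 // => Y1 _; rewrite big1.
  by apply: eq_bigr => Y1 _; rewrite big_mkcond.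
rewrite [RHS]big_mkcond; apply: eq_bigr => Y1 _.
have [HY1|NY1] := boolP (Y1 \subset T); last first.
  by rewrite big1 // => Y2 _; rewrite subUset (negbTE NY1).
by rewrite [RHS]big_mkcond; apply: eq_bigr => Y2 _; rewrite subUset HY1.
Qed.

Lemma evalA_prod s T : evalA (prodA s) T = \prod_(a <- s) evalA a T.
Proof.
elim: s => [|a s IH]; first by rewrite big_nil evalA_cst.
by rewrite big_cons /= evalA_mul IH.
Qed.

(* [a = F_x * coefA a x + dropA a x], and [substA a x b] replaces [F_x] by [b]. *)
Definition coefA a x : sfp R V :=
  [ffun Y : {set V} => \sum_(Z : {set V} | (x \in Z) && (Z :\ x == Y)) a Z].
Definition dropA a x : sfp R V := [ffun Y : {set V} => if x \in Y then 0 else a Y].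

Lemma evalA_drop a x T : evalA (dropA a x) T = evalA a (T :\ x).
Proof.
rewrite /evalA big_mkcond [RHS]big_mkcond; apply: eq_bigr => Y _.
by rewrite ffunE subsetD1; case: (Y \subset T); case: (x \in Y).
Qed.

Lemma evalA_coef_drop a x T :
  evalA (coefA a x) T + evalA (dropA a x) T = evalA a (x |: T).
Proof.
rewrite /evalA [RHS](bigID (fun Y : {set V} => x \in Y)) /=; congr (_ + _).
  under eq_bigr do rewrite ffunE.
  pose xQ (Z : {set V}) := (x \in Z) && (Z :\ x \subset T).
  rewrite (exchange_big_dep xQ) /= => [|Y Z HY /andP[HxZ /eqP EY]]; last first.
    by rewrite /xQ HxZ EY.
  apply: eq_big => [Z|Z /andP[HxZ HZT]]; first by rewrite -subDset andbC.
  rewrite (big_pred1 (Z :\ x)) // => Y; rewrite HxZ /=.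
  by case: (eqVneq Y (Z :\ x)) => [->|_]; rewrite ?HZT ?eqxx ?andbF.
rewrite big_mkcond [RHS]big_mkcond; apply: eq_bigr => Y _; rewrite ffunE.
case: (boolP (x \in Y)) => HxY; rewrite /= ?andbF ?andbT; first by case: ifP.
suff -> : (Y \subset x |: T) = (Y \subset T) by [].
have {2}<- : Y :\ x = Y by apply/setDidPl; rewrite disjoint_sym disjoints1.
by rewrite subDset.
Qed.

Lemma evalA_subst a x b T :
  evalA (substA a x b) T =
  mix (evalA b T) (evalA a (assign x true T)) (evalA a (assign x false T)).
Proof.
rewrite /substA evalA_add evalA_mul -/(coefA a x) -/(dropA a x) /mix /=.
rewrite -evalA_coef_drop evalA_drop; ring.
Qed.

Lemma evalA_inj a b : (forall T, evalA a T = evalA b T) -> a = b.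
Proof.
move=> Hab; apply/ffunP => Y; apply/eqP; rewrite -subr_eq0; apply/eqP.
have [n] := ubnP #|Y|; elim: n Y => // n IH Y /ltnSE HY.
move/eqP: (Hab Y); rewrite -subr_eq0 /evalA -sumrB (bigD1 Y) ?subxx //=.
rewrite big1 ?addr0 => [/eqP //|Z /andP[HZY NZY]].
apply: IH; apply: leq_trans HY; apply: proper_card; by rewrite properEneq NZY.
Qed.

End Evaluation.

Section Expectation.
Variables (R : realFieldType) (V : finType) (p : V -> R).
Implicit Types (s : seq V) (h : {set V} -> R) (T : {set V}).

Fixpoint expect s h T : R :=
  if s is u :: s' then
    mix (p u) (expect s' h (assign u true T)) (expect s' h (assign u false T))
  else h T.

Lemma eq_expect s h1 h2 : h1 =1 h2 -> expect s h1 =1 expect s h2.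
Proof. by move=> H; elim: s => [|u s IH] T //=; rewrite !IH. Qed.

Lemma expect_cat s1 s2 h T : expect (s1 ++ s2) h T = expect s1 (expect s2 h) T.
Proof. by elim: s1 T => [|u s IH] T //=; rewrite !IH. Qed.

Lemma expect_assign s h w b T : w \notin s ->
  expect s h (assign w b T) = expect s (fun T => h (assign w b T)) T.
Proof.
elim: s T => [|u s IH] T //=; rewrite inE negb_or eq_sym => /andP[Nuw Hw].
by rewrite !(assignC _ _ _ Nuw) !IH.
Qed.

Lemma expect_indep s h x : x \notin s -> indep h x -> indep (expect s h) x.
Proof. by move=> Hx Hh b T; rewrite expect_assign //; apply: eq_expect. Qed.

Lemma expect_mix_weight s a h1 h0 T : (forall x, x \in s -> indep a x) ->
  expect s (fun T => mix (a T) (h1 T) (h0 T)) T =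
  mix (a T) (expect s h1 T) (expect s h0 T).
Proof.
elim: s T => [|u s IH] T Ha //=.
rewrite !IH => [|x Hx|x Hx]; try by apply: Ha; rewrite inE Hx orbT.
rewrite !(Ha u (mem_head _ _)) /mix; ring.
Qed.

Lemma expect_mix_branches s b h1 h0 T :
  (forall x, x \in s -> indep h1 x /\ indep h0 x) ->
  expect s (fun T => mix (b T) (h1 T) (h0 T)) T =
  mix (expect s b T) (h1 T) (h0 T).
Proof.
elim: s T => [|u s IH] T Hh //=.
rewrite !IH => [|x Hx|x Hx]; try by apply: Hh; rewrite inE Hx orbT.
have [H1 H0] := Hh u (mem_head _ _); rewrite !H1 !H0 /mix; ring.
Qed.

End Expectation.

Section StructureFunction.
Variables (V : finType) (E : rel V).
Hypothesis acyclic : forall x y, E x y -> ~~ connect E y x.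

Definition gate_value (g : gate) (u : V) (F : V -> bool) (b : bool) : bool :=
  match g with
  | BE => b
  | OR => [exists c, E u c && F c]
  | AND => [forall c, E u c ==> F c]
  end.

Lemma eq_gate_value g u F F' b :
  (forall c, E u c -> F c = F' c) -> gate_value g u F b = gate_value g u F' b.
Proof.
move=> H; case: g => //=; first by apply: eq_existsb => c; case: (boolP (E u c)) => //= /H.
by apply: eq_forallb => c; case: (boolP (E u c)) => //= /H.
Qed.

Lemma Sfuel_succ gamma n v f :
  Sfuel E gamma n.+1 v f = gate_value (gamma v) v (Sfuel E gamma n ^~ f) (f v).
Proof. by rewrite /=; case: (gamma v). Qed.

Lemma Sfuel_stable gamma n m v f : (ndesc E v <= n)%N -> (n <= m)%N ->
  Sfuel E gamma n v f = Sfuel E gamma m v f.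
Proof.
elim: n m v => [|n IH] [|m] v Hv Hnm //; first by have := ndesc_gt0 E v; rewrite ltnNge Hv.
rewrite !Sfuel_succ; apply: eq_gate_value => c /(ndesc_edge_lt acyclic) Hc.
exact: IH (leq_trans Hc Hv) Hnm.
Qed.

Lemma S_T_unfold gamma v f :
  S_T E gamma v f = gate_value (gamma v) v (S_T E gamma ^~ f) (f v).
Proof.
have := ndesc_le_card E v; rewrite /S_T; case: #|V| => [|n] Hv.
  by have := ndesc_gt0 E v; rewrite ltnNge Hv.
rewrite Sfuel_succ; apply: eq_gate_value => c /(ndesc_edge_lt acyclic) Hc.
by apply: Sfuel_stable; rewrite // -ltnS (leq_trans Hc Hv).
Qed.

Variable gamma : V -> gate.
Implicit Types (K Ks Kw T : {set V}).

Lemma S_T_BE v f f' : (forall x, isBE (gamma x) -> f x = f' x) ->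
  S_T E gamma v f = S_T E gamma v f'.
Proof.
move=> Hf; elim/(dag_ind acyclic): v => v IH; rewrite !S_T_unfold.
case Hv: (gamma v); try exact: eq_gate_value.
by apply: Hf; rewrite Hv.
Qed.

Definition gates_in (K : {set V}) (x : V) : gate := if x \in K then gamma x else BE.

(* Only the gates in [K] are evaluated; every other node is read as a basic event
   that fails iff it lies in [T]. *)
Definition S_in K v (T : {set V}) := S_T E (gates_in K) v (fun x => x \in T).

Lemma S_inE K v T : S_in K v T =
  if v \in K then gate_value (gamma v) v (S_in K ^~ T) (v \in T) else v \in T.
Proof. by rewrite /S_in S_T_unfold /gates_in; case: (v \in K). Qed.

Lemma S_in_setT v T : S_in setT v T = S_T E gamma v (fun x => x \in T).
Proof.
elim/(dag_ind acyclic): v => v IH.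
by rewrite S_inE S_T_unfold in_setT; apply: eq_gate_value.
Qed.

Lemma S_in_indep K u x : u != x -> (forall z, z \in K -> ~~ E z x) ->
  indep (S_in K u) x.
Proof.
move=> + HK b T; elim/(dag_ind acyclic): u => u IH Nux.
rewrite !S_inE in_assign (negbTE Nux); case: (boolP (u \in K)) => // HuK.
apply: eq_gate_value => c Euc; apply: IH => //.
by apply: contraNneq (HK u HuK) => <-.
Qed.

Lemma eq_S_in K K' u T : (forall z, connect E u z -> (z \in K) = (z \in K')) ->
  S_in K u T = S_in K' u T.
Proof.
elim/(dag_ind acyclic): u => u IH HK.
rewrite !S_inE -(HK u (connect0 _ _)); case: (u \in K) => //.
apply: eq_gate_value => c Euc; apply: IH => // z Hz; apply: HK.
exact: connect_trans (connect1 Euc) Hz.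
Qed.

Lemma S_in_setU Ks Kw w T : w \in Kw ->
  (forall z, connect E w z -> z \notin Ks) ->
  (forall z c, z \in Ks -> E z c -> c \in Kw -> c = w) ->
  forall u, u \notin Kw -> S_in (Ks :|: Kw) u T = S_in Ks u (assign w (S_in Kw w T) T).
Proof.
move=> Hw HwKs Hentry; elim/(dag_ind acyclic) => u IH Hu.
have Nuw : u != w by apply: contraNneq Hu => ->.
rewrite [LHS]S_inE [RHS]S_inE in_setU (negbTE Hu) orbF in_assign (negbTE Nuw).
case: (boolP (u \in Ks)) => // HuKs; apply: eq_gate_value => c Euc.
have [->|Ncw] := eqVneq c w; last first.
  by apply: IH => //; apply: contra_neqN (Hentry u c HuKs Euc) Ncw.
have -> : S_in (Ks :|: Kw) w T = S_in Kw w T.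
  by apply: eq_S_in => z /HwKs HzKs; rewrite in_setU (negbTE HzKs).
by rewrite [RHS]S_inE (negbTE (HwKs w (connect0 _ _))) in_assign eqxx.
Qed.

End StructureFunction.

Section FailurePolynomials.
Variables (R : realFieldType) (V : finType) (E : rel V).
Variables (gamma : V -> gate) (p : V -> R).
Hypothesis acyclic : forall x y, E x y -> ~~ connect E y x.
Implicit Types (K Ks Kw : {set V}).

Lemma evalA_gate_poly v T : ~~ isBE (gamma v) ->
  evalA (gate_poly E gamma p v) T =
  (gate_value E (gamma v) v (fun c => c \in T) (v \in T))%:R.
Proof.
rewrite /gate_poly; case: (gamma v) => //= _.
  rewrite evalA_sub evalA_cst evalA_prod big_map big_filter big_enum_cond /=.
  under eq_bigr do rewrite evalA_sub evalA_cst evalA_var.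
  case: (boolP [exists c, E v c && (c \in T)]) => [|/existsPn Hno].
    case/existsP=> c /andP[Evc HcT].
    by rewrite (bigD1 c) //= HcT subrr mul0r subr0.
  rewrite big1 ?subrr // => c Evc.
  by move: (Hno c); rewrite Evc /= => /negbTE ->; rewrite subr0.
rewrite evalA_prod big_map big_filter big_enum_cond /=.
under eq_bigr do rewrite evalA_var.
case: (boolP [forall c, E v c ==> (c \in T)]) => [/forallP Hall|/forallPn[c]].
  by rewrite big1 // => c Evc; move: (Hall c); rewrite Evc => /= ->.
by rewrite negb_imply => /andP[Evc NcT]; rewrite (bigD1 c) //= (negbTE NcT) mul0r.
Qed.

(* [g] at [T] is the probability that [v] fails when the basic events of [K] are
   random and every node outside [K] fails iff it lies in [T]. *)
Definition fail_poly K v (g : sfp R V) :=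
  exists2 B : seq V, uniq B /\ B =i [pred x | (x \in K) && isBE (gamma x)] &
    forall T, evalA g T = expect p B (fun T => (S_in E gamma K v T)%:R) T.

(* [Kw] hangs below [w] and is entered from [Ks] only through [w], so [w] acts on
   [v] as one more independent event, failing with probability [gw]. *)
Lemma fail_poly_subst Ks Kw v w acc gw :
  fail_poly Ks v acc -> fail_poly Kw w gw ->
  v \notin Kw -> w \in Kw -> (forall z, z \in Kw -> connect E w z) ->
  (forall z, connect E w z -> z \notin Ks) ->
  (forall z c, z \in Ks -> E z c -> c \in Kw -> c = w) ->
  fail_poly (Ks :|: Kw) v (substA acc w gw).
Proof.
move=> [Bs [UBs MBs] Hacc] [Bw [UBw MBw] Hgw] HvKw HwKw HKw HwKs Hentry.
have BsKs x : x \in Bs -> x \in Ks by rewrite MBs => /andP[].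
have BwKw x : x \in Bw -> x \in Kw by rewrite MBw => /andP[].
have BwNKs x : x \in Bw -> x \notin Ks by move/BwKw/HKw/HwKs.
exists (Bs ++ Bw).
  split=> [|x]; last by rewrite mem_cat MBs MBw !inE -andb_orl.
  rewrite cat_uniq UBs UBw andbT /=; apply/hasPn => x /BwNKs.
  by apply: contra => /BsKs.
pose Hs b T := (S_in E gamma Ks v (assign w b T))%:R : R.
have Hs_indep b x : x \in Bw -> indep (Hs b) x.
  move=> HxBw c T; rewrite /Hs; have [->|Nxw] := eqVneq x w.
    by rewrite assign_assign.
  rewrite -(assignC _ _ _ Nxw) S_in_indep //.
    by apply: contraNneq HvKw => ->; exact: BwKw.
  move=> z HzKs; apply: contra_neqN Nxw => Ezx.
  exact: Hentry HzKs Ezx (BwKw x HxBw).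
have inner T : expect p Bw (fun T => (S_in E gamma (Ks :|: Kw) v T)%:R) T =
    mix (evalA gw T) (Hs true T) (Hs false T).
  rewrite Hgw -expect_mix_branches; last by move=> x Hx; split; exact: Hs_indep.
  apply: eq_expect => T'; rewrite (@S_in_setU _ _ acyclic gamma Ks Kw w) // /Hs /mix.
  by case: (S_in E gamma Kw w T'); rewrite /=; ring.
have gw_indep x : x \in Bs -> indep (evalA gw) x.
  move=> HxBs b T; rewrite !Hgw; apply: expect_indep.
    by apply: contraL (BsKs x HxBs) => /BwNKs.
  move=> c T'; rewrite /= S_in_indep //.
    by apply: contraTneq (HwKs w (connect0 _ _)) => ->; rewrite BsKs.
  move=> z /HKw Hwz; apply: contraL (BsKs x HxBs) => Ezx.
  exact: HwKs (connect_trans Hwz (connect1 Ezx)).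
move=> T; rewrite expect_cat (eq_expect _ _ inner) expect_mix_weight //.
have HwBs : w \notin Bs := contra (@BsKs w) (HwKs w (connect0 _ _)).
by rewrite evalA_subst !Hacc !expect_assign.
Qed.

End FailurePolynomials.

Section BasicEventVectors.
Variables (R : realFieldType) (V : finType) (gamma : V -> gate) (p : V -> R).
Implicit Types (T : {set V}) (f : {ffun BEt gamma -> bool}).

Definition weight (u : BEt gamma) (b : bool) : R :=
  if b then p (val u) else 1 - p (val u).

Definition fill f T : {set V} :=
  [set x | if isBE (gamma x) then extf f x else x \in T].

Definition agree (s : seq V) f T :=
  [forall u, (val u \notin s) ==> (f u == (val u \in T))].

Lemma fill_assign f a b T : isBE (gamma a) -> fill f (assign a b T) = fill f T.
Proof.
move=> Ha; apply/setP => x; rewrite !inE in_assign.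
by case: eqP => [->|//]; rewrite Ha.
Qed.

Lemma agree_cons s f a (Ha : isBE (gamma a)) b T : a \notin s ->
  agree s f (assign a b T) = agree (a :: s) f T && (f (exist _ a Ha) == b).
Proof.
move=> Has; apply/forallP/andP => [H|[/forallP H1 /eqP H2] u].
  split; last by move: (H (exist _ a Ha)); rewrite /= Has in_assign eqxx.
  apply/forallP => u; apply/implyP; rewrite inE negb_or => /andP[Nua Hus].
  by move: (H u); rewrite Hus in_assign (negbTE Nua).
apply/implyP => Hus; rewrite in_assign; case: (eqVneq (val u) a) => [Eua|Nua].
  by rewrite (_ : u = exist _ a Ha) ?H2 //; apply: val_inj.
by move: (H1 u); rewrite inE negb_or Nua Hus.
Qed.

Lemma expect_BE_sum s h T : uniq s -> (forall x, x \in s -> isBE (gamma x)) ->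
  expect p s h T = \sum_(f | agree s f T)
     (\prod_(u | val u \in s) weight u (f u)) * h (fill f T).
Proof.
elim: s T => [|a s IH] T Us sBE.
  rewrite (big_pred1 [ffun u => val u \in T]) /=.
    rewrite big_pred0 // mul1r; congr h; apply/setP => x; rewrite !inE.
    by case: (boolP (isBE (gamma x))) => // Hx; rewrite /extf insubT ffunE.
  move=> f; apply/forallP/eqP => [H|-> u]; last by rewrite ffunE eqxx.
  by apply/ffunP => u; rewrite ffunE; apply/eqP; exact: H.
have Ha : isBE (gamma a) by apply: sBE; rewrite mem_head.
move: Us; rewrite cons_uniq => /andP[Has Us].
have {}IH T' := IH T' Us (fun x Hx => sBE x (mem_behead (s := a :: s) Hx)).
set ua : BEt gamma := exist _ a Ha.
have Hb b : (if b then p a else 1 - p a) * expect p s h (assign a b T) =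
    \sum_(f | agree (a :: s) f T && (f ua == b))
      (\prod_(u | val u \in a :: s) weight u (f u)) * h (fill f T).
  rewrite IH mulr_sumr; apply: eq_big => [f|f]; first exact: agree_cons.
  rewrite agree_cons // => /andP[_ /eqP Hf].
  rewrite fill_assign // mulrA; congr (_ * _).
  rewrite [RHS](bigD1 ua) ?mem_head //= /weight /= Hf; congr (_ * _).
  apply: eq_bigl => u; rewrite inE; case: (eqVneq (val u) a) => Hua /=.
    by rewrite (_ : u = ua) ?eqxx //; [apply/negbTE | apply: val_inj].
  suff -> : u != ua by rewrite andbT.
  by apply: contraNneq Hua => ->.
rewrite /= /mix (Hb true) (Hb false) [RHS](bigID (fun f => f ua)) /=.
by congr (_ + _); apply: eq_bigl => f; rewrite ?eqb_id ?eqbF_neg.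
Qed.

Lemma unreliability_expect (E : rel V) root B T :
  (forall x y, E x y -> ~~ connect E y x) -> uniq B -> B =i [pred x | isBE (gamma x)] ->
  expect p B (fun T => (S_T E gamma root (fun x => x \in T))%:R) T =
  unreliability E gamma p root.
Proof.
move=> acyclic UB MB; have inB (u : BEt gamma) : val u \in B by rewrite MB inE (valP u).
rewrite expect_BE_sum // => [|x]; last by rewrite MB.
rewrite /unreliability [RHS]big_mkcond; apply: eq_big => [f|f _].
  by apply/forallP => u; rewrite inB.
rewrite (eq_bigl predT) // (@S_T_BE _ _ acyclic gamma root _ (extf f)) => [|x Hx].
  by case: (S_T E gamma root (extf f)); rewrite ?mulr1 ?mulr0.
by rewrite inE Hx.
Qed.

End BasicEventVectors.

Section Regions.
Variables (R : realFieldType) (V : finType) (E : rel V).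
Variables (gamma : V -> gate) (p : V -> R) (root : V).
Hypothesis HT : is_fault_tree E gamma p root.
Variable ord : V -> seq V.
Hypothesis Hord : forall v, todo_order E root v (ord v).

Let acyclic : forall x y, E x y -> ~~ connect E y x. Proof. by case: HT. Qed.
Let rooted v : connect E root v. Proof. by case: HT. Qed.

Local Notation fail_poly := (fail_poly E gamma p).

Definition region w := w |: [set u | `[< dominates E root w u >]].

(* The nodes accounted for by [g_v] once the nodes of [s] have been substituted. *)
Definition region_upto v s := v |: \bigcup_(w <- s) region w.

Lemma mem_region w u : u \in region w <-> u = w \/ dominates E root w u.
Proof.
rewrite in_setU1 inE; split; first by case/orP => [/eqP|/asboolP]; [left|right].
by case=> [->|/asboolT ->]; rewrite ?eqxx ?orbT.
Qed.

Lemma region_connect w z : z \in region w -> connect E w z.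
Proof. by case/mem_region => [->|/dominates_connect]. Qed.

Lemma dominates_region v w u :
  dominates E root v w -> u \in region w -> dominates E root v u.
Proof. by move=> Dvw /mem_region[->|/(dominates_trans acyclic Dvw)]. Qed.

Lemma mem_ord v w : w \in ord v <-> is_idom E root w v.
Proof. by case: (Hord v). Qed.

Lemma idom_notin_region v w : is_idom E root w v -> v \notin region w.
Proof.
by case=> Dvw _; apply: contra (dominates_connectN acyclic Dvw); exact: region_connect.
Qed.

Lemma ord_before_unreachable v s1 w s2 w' : ord v = s1 ++ w :: s2 -> w' \in s1 ->
  w' != w /\ ~~ connect E w w'.
Proof.
move=> Hs Hw'; have [Us _ Nprec] := Hord v.
have Nw'w : w' != w.
  move: Us; rewrite Hs cat_uniq => /and3P[_ /hasPn/(_ w (mem_head _ _)) + _].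
  by apply: contraNneq => <-.
split=> //; have := Nprec (index w' s1) (size s1).
rewrite Hs size_cat /= index_mem Hw' addnS ltnS leq_addr !nth_cat index_mem Hw'.
by rewrite ltnn subnn nth_index //= /prec /preceq Nw'w andbT => /(_ isT).
Qed.

(* An earlier [w'] whose region met the descendants of [w] would dominate [w],
   hence lie above [id(w) = v], which dominates [w']. *)
Lemma region_upto_disjoint v s1 w s2 : ord v = s1 ++ w :: s2 ->
  forall z, connect E w z -> z \notin region_upto v s1.
Proof.
move=> Hs z Hwz; have [Dvw idw_min] : is_idom E root w v.
  by apply/mem_ord; rewrite Hs mem_cat mem_head orbT.
rewrite in_setU1 negb_or; apply/andP; split.
  by apply: contraNneq (dominates_connectN acyclic Dvw) => <-.
rewrite bigcup_seq; apply/bigcupP => -[w' Hw' /mem_region Hzw'].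
have [Dvw' _] : is_idom E root w' v by apply/mem_ord; rewrite Hs mem_cat Hw'.
have [Nw'w Nww'] := ord_before_unreachable Hs Hw'.
have Dw'z : dominates E root w' z by case: Hzw' => // Ezw'; rewrite -Ezw' Hwz in Nww'.
have Hw'v : connect E w' v := idw_min w' (dominates_above rooted Dw'z Hwz Nww').
by have := dominates_connectN acyclic Dvw'; rewrite Hw'v.
Qed.

Lemma region_entry v s1 w s2 : ord v = s1 ++ w :: s2 ->
  forall z c, z \in region_upto v s1 -> E z c -> c \in region w -> c = w.
Proof.
move=> Hs z c Hz Ezc /mem_region[//|Dwc]; exfalso.
by move: Hz; rewrite (negbTE (region_upto_disjoint Hs (dominates_edge rooted Dwc Ezc))).
Qed.

Lemma dominates_ord v u : dominates E root v u -> exists2 w, w \in ord v & u \in region w.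
Proof.
elim/(@top_down_ind _ E): u => u IH Dvu.
have Nur : u != root.
  by apply: contraTneq (rooted v) => <-; exact: (dominates_connectN acyclic Dvu).
have [d [Ddu dmin]] := idom_exists acyclic rooted Nur.
have [<-|Ndv] := eqVneq d v.
  by exists u; [apply/mem_ord | rewrite setU11].
have Dvd : dominates E root v d.
  by apply: (dominates_between acyclic rooted Dvu Ddu); [exact: dmin | rewrite eq_sym].
have [w Hw Hdw] := IH d (ndesc_dominates_lt acyclic Ddu) Dvd.
exists w => //; apply/mem_region; right.
by case/mem_region: Hdw => [<- //|Dwd]; exact: (dominates_trans acyclic Dwd Ddu).
Qed.

Lemma region_upto_ord v : region v = region_upto v (ord v).
Proof.
apply/setP => u; rewrite /region_upto in_setU1 bigcup_seq; apply/idP/idP.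
  case/mem_region => [->|/dominates_ord[w Hw Huw]]; first by rewrite eqxx.
  by apply/orP; right; apply/bigcupP; exists w.
case/predU1P => [->|/bigcupP[w /mem_ord[Dvw _] Huw]]; first exact: setU11.
by apply/mem_region; right; exact: dominates_region Dvw Huw.
Qed.

Lemma region_upto_rcons v s w :
  region_upto v (rcons s w) = region_upto v s :|: region w.
Proof. by rewrite /region_upto -cats1 big_cat big_seq1 setUA. Qed.

Lemma region_BE v : isBE (gamma v) -> region v = [set v].
Proof.
move=> Hv; apply/setP => u; rewrite inE; apply/idP/eqP; last by move->; exact: setU11.
case/mem_region=> [//|Dvu]; have := dominates_neq Dvu.
case/connectP: (dominates_connect Dvu) => [[_ ->|c s /= /andP[Evc _] _]].
  by rewrite eqxx.
have [_ _ leaf _] := HT.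
by move: Hv; rewrite leaf => /existsPn/(_ c); rewrite Evc.
Qed.

Lemma fail_poly_BE v : isBE (gamma v) -> fail_poly (region v) v (cstA V (p v)).
Proof.
move=> Hv; rewrite region_BE //.
exists [:: v]; first by split=> // x; rewrite !inE; case: eqP => // ->.
move=> T; rewrite evalA_cst /= /mix !(S_inE acyclic) set11.
case: (gamma v) Hv => //= _; rewrite !in_assign eqxx /=; ring.
Qed.

Lemma fail_poly_gate v : ~~ isBE (gamma v) ->
  fail_poly (region_upto v [::]) v (gate_poly E gamma p v).
Proof.
move=> Hv; have Hv1 : region_upto v [::] = [set v] by rewrite /region_upto big_nil setU0.
exists [::]; first split=> // x.
  by rewrite Hv1 !inE; case: eqP => // ->; rewrite (negbTE Hv).
move=> T; rewrite evalA_gate_poly // Hv1 /= (S_inE acyclic) set11; congr (_%:R).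
congr (nat_of_bool _); apply: eq_gate_value => c Evc; rewrite (S_inE acyclic) inE.
by have := edge_neq acyclic Evc; rewrite eq_sym => /negbTE ->.
Qed.

Lemma fail_poly_foldl v n :
  (forall w, w \in ord v -> fail_poly (region w) w (gfuel E gamma p ord n w)) ->
  forall s2 s1 acc, ord v = s1 ++ s2 -> fail_poly (region_upto v s1) v acc ->
  fail_poly (region v) v
    (foldl (fun acc w => substA acc w (gfuel E gamma p ord n w)) acc s2).
Proof.
move=> Hw; elim=> [|w s2 IH] s1 acc Hs Hacc /=.
  by rewrite region_upto_ord Hs cats0.
apply: (IH (rcons s1 w)); first by rewrite cat_rcons.
have Hwv : w \in ord v by rewrite Hs mem_cat mem_head orbT.
rewrite region_upto_rcons; apply: (fail_poly_subst acyclic Hacc (Hw w Hwv)).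
- exact/idom_notin_region/mem_ord.
- exact: setU11.
- exact: region_connect.
- exact: region_upto_disjoint Hs.
- exact: region_entry Hs.
Qed.

Lemma fail_poly_gfuel n v : (ndesc E v <= n)%N ->
  fail_poly (region v) v (gfuel E gamma p ord n v).
Proof.
elim: n v => [|n IH] v Hv; first by have := ndesc_gt0 E v; rewrite ltnNge Hv.
have Hw w : w \in ord v -> fail_poly (region w) w (gfuel E gamma p ord n w).
  move=> /mem_ord[/(ndesc_dominates_lt acyclic) Hw _]; apply: IH.
  by rewrite -ltnS (leq_trans Hw Hv).
rewrite /=; case Hg: (gamma v); last by apply: fail_poly_BE; rewrite Hg.
1,2: by apply: (fail_poly_foldl Hw (s1 := [::])) => //; apply: fail_poly_gate; rewrite Hg.
Qed.

End Regions.

Theorem theorem21 (R : realFieldType) (V : finType) (E : rel V)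
  (gamma : V -> gate) (p : V -> R) (root : V)
  (HT : is_fault_tree E gamma p root)
  (ord : V -> seq V)
  (Hord : forall v, todo_order E root v (ord v)) :
  SFPA E gamma p root ord = cstA V (unreliability E gamma p root).
Proof.
have [acyclic rooted _ _] := HT.
have region_root : region E root root = [set: V].
  apply/setP => u; rewrite in_setT; apply/mem_region.
  by have [->|Nur] := eqVneq u root; [left | right; exact: root_dominates].
have [B [UB MB] HB] := fail_poly_gfuel HT Hord (ndesc_le_card E root).
rewrite region_root in MB HB.
apply: evalA_inj => T; rewrite evalA_cst /SFPA HB.
rewrite -(unreliability_expect p root T acyclic UB) => [|x]; last by rewrite MB !inE.
by apply: eq_expect => T'; rewrite S_in_setT.
Qed.
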